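(* If a symmetric restaking network $G$ admits a profitable attack, then it admits a profitable attack that is consolidated.
   Context: A restaking network is a tuple $G=(V,S,\sigma,w,\theta,\pi)$ with finite nonempty validator set $V$, finite service set $S$, stake $\sigma:V\to\mathbb{R}_{>0}$, allocation $w:V\times S\to\mathbb{R}_{\ge0}$ with $w(v,s)\le\sigma(v)$, thresholds $\theta:S\to[0,1]$, prizes $\pi:S\to\mathbb{R}_{>0}$. An attack is $\alpha:V\times S\to\mathbb{R}_{\ge0}$ with $\alpha(v,s)\le w(v,s)$; attacked services $S_\alpha=\{s:\sum_v\alpha(v,s)\ge\theta(s)\sum_v w(v,s)\}$; validator cost $c_v(\alpha)=\min(\sigma(v),\sum_{s\in S_\alpha}\alpha(v,s))$; total cost $C(\alpha)=\sum_vc_v(\alpha)$; prize $\Pi(\alpha)=\sum_{s\in S_\alpha}\pi(s)$. Profitable: $S_\alpha\ne\emptyset$ and $C(\alpha)\le\Pi(\alpha)$. $G$ is symmetric if all validators have the same stake $\sigma$, for each $s$ all validators have the same allocation $w(s)$, and all services have the same threshold $\theta$. Let $m=|V|$ and $V=\{v_1,\dots,v_m\}$ (any ordering). An attack is consolidated if for every $s\in S_\alpha$ and $i\in\{1,\dots,m\}$: $\alpha(v_i,s)=w(s)$ if $i\le\lfloor\theta m\rfloor$; $\alpha(v_i,s)=(\theta m-\lfloor\theta m\rfloor)w(s)$ if $i=\lfloor\theta m\rfloor+1$; $\alpha(v_i,s)=0$ otherwise. *)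

From mathcomp Require Import all_boot all_order all_algebra.
From mathcomp Require Import reals.
Set Implicit Arguments. Unset Strict Implicit. Unset Printing Implicit Defensive.
Import Order.TTheory GRing.Theory Num.Theory.
Local Open Scope ring_scope.

Section Restaking.
Variables (R : realType) (V S : finType).

Definition is_network (sigma : V -> R) (w : V -> S -> R) (theta : S -> R)
    (pi : S -> R) : Prop :=
  [/\ (0 < #|V|)%N,
      (forall v, 0 < sigma v),
      (forall v s, 0 <= w v s /\ w v s <= sigma v),
      (forall s, 0 <= theta s /\ theta s <= 1) &
      (forall s, 0 < pi s)].

Definition is_attack (w : V -> S -> R) (alpha : V -> S -> R) : Prop :=
  forall v s, 0 <= alpha v s /\ alpha v s <= w v s.

Definition attacked (w : V -> S -> R) (theta : S -> R) (alpha : V -> S -> R)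
    : {set S} :=
  [set s | theta s * (\sum_v w v s) <= \sum_v alpha v s].

Definition vcost (sigma : V -> R) (w : V -> S -> R) (theta : S -> R)
    (alpha : V -> S -> R) (v : V) : R :=
  Num.min (sigma v) (\sum_(s in attacked w theta alpha) alpha v s).

Definition cost sigma w theta alpha : R := \sum_v vcost sigma w theta alpha v.

Definition prize (w : V -> S -> R) theta (pi : S -> R) alpha : R :=
  \sum_(s in attacked w theta alpha) pi s.

Definition profitable sigma w theta pi alpha : Prop :=
  attacked w theta alpha != set0 /\
  cost sigma w theta alpha <= prize w theta pi alpha.

Definition symmetric_net (sigma : V -> R) (w : V -> S -> R) (theta : S -> R)
    (sg : R) (ws : S -> R) (th : R) : Prop :=
  [/\ (forall v, sigma v = sg), (forall v s, w v s = ws s) &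
      (forall s, theta s = th)].

(* consolidated w.r.t. the ordering e : 'I_m -> V (v_{i+1} = e i, 0-based),
   m = #|V|; ws, th as in [symmetric]. *)
Definition consolidated (w : V -> S -> R) (theta : S -> R) (ws : S -> R)
    (th : R) (e : 'I_#|V| -> V) (alpha : V -> S -> R) : Prop :=
  forall s, s \in attacked w theta alpha -> forall i : 'I_#|V|,
    let fl := Num.floor (th * (#|V|%:R)) in
    alpha (e i) s =
      if (i.+1%:Z <= fl) then ws s
      else if (i.+1%:Z == fl + 1) then (th * #|V|%:R - fl%:~R) * ws s
      else 0.

End Restaking.

From mathcomp Require Import all_boot all_order all_algebra.
From mathcomp Require Import reals.
From mathcomp Require Import zify lra.
Set Implicit Arguments. Unset Strict Implicit. Unset Printing Implicit Defensive.
Import Order.TTheory GRing.Theory Num.Theory.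
Local Open Scope ring_scope.

(* Symmetry lets any profitable attack [alpha] with attacked set [T] be
   replaced by the consolidated attack that charges the [theta m] units of
   required stake greedily to the first validators, on every service of [T]
   at once.  Every service of [T] stays attacked, so the prize does not drop.
   Writing [L v] for the load of [alpha] on [v] and [W] for the total
   allocation on [T], the cost of [alpha] is [sum_v min(sigma, L v)] with
   [0 <= L v <= W] and [sum_v L v >= theta m W]; among such load profiles
   the greedy one [min(sigma, slot_fill (theta m) i * W)] is cheapest: the
   validators saturated by [alpha] already pay [sigma] each, and the
   remaining ones carry at least the part of [theta m W] that the greedy
   profile puts past them. *)

Section SlotFill.
Variable R : realType.
Implicit Types (x : R) (i k m : nat).

(* The part of a level [x] lying in the unit slot [[i, i+1]]. *)
Definition slot_fill x i : R := Num.min x i.+1%:R - Num.min x i%:R.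

Lemma slot_fill_ge0 x i : 0 <= slot_fill x i.
Proof.
by rewrite subr_ge0 le_min ge_min lexx ge_min ler_nat leqnSn orbT.
Qed.

Lemma slot_fill_le1 x i : slot_fill x i <= 1.
Proof.
rewrite /slot_fill -natr1.
by case: (leP x i%:R) => h1; case: (leP x (i%:R + 1)) => h2; lra.
Qed.

Lemma slot_fill_le x i : 0 <= x -> slot_fill x i <= x.
Proof.
rewrite /slot_fill -natr1 => x0.
have i0 : 0 <= i%:R :> R by [].
by case: (leP x i%:R) => h1; case: (leP x (i%:R + 1)) => h2; lra.
Qed.

Lemma sum_slot_fill x k m : (k <= m)%N ->
  \sum_(k <= i < m) slot_fill x i = Num.min x m%:R - Num.min x k%:R.
Proof. exact: (telescope_sumr (fun i => Num.min x i%:R)). Qed.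

Lemma slot_fillE x i :
  slot_fill x i =
  if i.+1%:Z <= Num.floor x then 1
  else if i.+1%:Z == Num.floor x + 1 then x - (Num.floor x)%:~R else 0.
Proof.
have fle := floor_le x; have fgt := floorD1_gt x.
rewrite /slot_fill; case: ifP => [full|/negbT notfull].
  have ix : i.+1%:R <= x by move: full; rewrite floor_ge_int.
  rewrite !min_r //; last by apply: le_trans ix; rewrite ler_nat.
  by rewrite -natr1 addrAC subrr add0r.
case: ifP => [/eqP partial|/negbT empty].
  have fl : Num.floor x = i%:Z by lia.
  rewrite fl in fle fgt *; rewrite min_l ?min_r //.
  by apply: ltW; move: fgt; rewrite -natr1 intrD.
have /[!floor_lt_int] xi : Num.floor x < i%:Z by lia.
have minE n : (i <= n)%N -> Num.min x n%:R = x.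
  by move=> le_in; apply/min_l/ltW/(lt_le_trans xi); rewrite ler_nat.
by rewrite !minE ?subrr.
Qed.

Lemma sum_min_slot_fill_le (V : finType) (sg W x : R) (L : V -> R) :
  0 <= W -> x <= #|V|%:R -> (forall v, 0 <= L v <= W) ->
  x * W <= \sum_v L v ->
  \sum_(i < #|V|) Num.min sg (slot_fill x i * W) <= \sum_v Num.min sg (L v).
Proof.
move=> W0 xm Lb Ltot.
pose P := [pred v | sg <= L v]; set k := #|P|.
have km : (k <= #|V|)%N by apply: max_card.
have satE : \sum_(v | P v) Num.min sg (L v) = sg *+ k.
  by rewrite -sumr_const; apply: eq_big => // v; rewrite inE => /min_l.
have unsatE : \sum_(v | ~~ P v) Num.min sg (L v) = \sum_(v | ~~ P v) L v.
  by apply: eq_bigr => v; rewrite inE -ltNge => /ltW /min_r.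
have satL : \sum_(v | P v) L v <= k%:R * W.
  rewrite mulr_natl -sumr_const; apply: ler_sum => v _; by case/andP: (Lb v).
have unsatL : 0 <= \sum_(v | ~~ P v) L v.
  by apply: sumr_ge0 => v _; case/andP: (Lb v).
rewrite (bigID P) /= satE unsatE.
rewrite -(big_mkord xpredT (fun i => Num.min sg (slot_fill x i * W))).
rewrite (big_cat_nat (leq0n k) km) /=.
apply: lerD.
  rewrite -[k in sg *+ k]subn0 -sumr_const_nat.
  by apply: ler_sum => i _; rewrite ge_min lexx.
apply: (@le_trans _ _ (W * (x - Num.min x k%:R))).
  rewrite -[X in W * (X - _)](min_l xm) -sum_slot_fill // mulr_sumr.
  by apply: ler_sum => i _; rewrite mulrC ge_min lexx orbT.
move: Ltot; rewrite (bigID P) /=.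
by case: (leP x k%:R) => xk Ltot; nra.
Qed.

End SlotFill.

Section PrizeMonotone.
Variables (R : realType) (V S : finType).
Variables (w : V -> S -> R) (theta : S -> R) (pi : S -> R).
Hypothesis pi_ge0 : forall s, 0 <= pi s.

Lemma prize_subset (alpha beta : V -> S -> R) :
  attacked w theta alpha \subset attacked w theta beta ->
  prize w theta pi alpha <= prize w theta pi beta.
Proof.
set A := attacked w theta alpha => /subsetP sub.
rewrite /prize [X in _ <= X](bigID (mem A)) /=.
have -> : \sum_(s in attacked w theta beta | s \in A) pi s
          = \sum_(s in A) pi s.
  apply: eq_bigl => s.
  by case: (boolP (s \in A)) => [/sub -> | _]; rewrite ?andbF.
by rewrite lerDl sumr_ge0.
Qed.

End PrizeMonotone.

Section Consolidation.
Variables (R : realType) (V S : finType).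
Variables (sigma : V -> R) (w : V -> S -> R) (theta : S -> R).
Variables (sg : R) (ws : S -> R) (th : R).
Hypotheses (sigmaE : forall v, sigma v = sg) (wE : forall v s, w v s = ws s)
  (thetaE : forall s, theta s = th).
Hypotheses (ws_ge0 : forall s, 0 <= ws s) (th_ge0 : 0 <= th) (th_le1 : th <= 1).

Implicit Type T : {set S}.

Let m := #|V|.
Let x := th * m%:R.

Definition consolidation (T : {set S}) : V -> S -> R :=
  fun v s => if s \in T then slot_fill x (enum_rank v) * ws s else 0.

Let x_ge0 : 0 <= x. Proof. exact: mulr_ge0. Qed.

Let x_le_card : x <= m%:R.
Proof. by rewrite -[X in _ <= X]mul1r ler_wpM2r. Qed.

Lemma sum_allocation s : \sum_v w v s = m%:R * ws s.
Proof. by under eq_bigr do rewrite wE; rewrite sumr_const mulr_natl. Qed.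

Lemma sum_slot_fill_card : \sum_(i < m) slot_fill x i = x.
Proof.
rewrite -(big_mkord xpredT (slot_fill x)) sum_slot_fill //.
by rewrite (min_l x_le_card) (min_r x_ge0) subr0.
Qed.

Lemma consolidation_attack T : is_attack w (consolidation T).
Proof.
move=> v s; rewrite /consolidation wE; case: ifP => _; last by split.
split; first by rewrite mulr_ge0 ?slot_fill_ge0.
by rewrite ler_piMl ?slot_fill_le1.
Qed.

Lemma sum_consolidation T s :
  \sum_v consolidation T v s = if s \in T then x * ws s else 0.
Proof.
rewrite /consolidation; case: ifP => _; last by rewrite big1.
rewrite -mulr_suml -[X in _ = X * _]sum_slot_fill_card; congr (_ * _).
rewrite (reindex _ (onW_bij _ (@enum_val_bij V))) /=.
by under eq_bigr do rewrite enum_valK.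
Qed.

Lemma subset_attacked_consolidation T :
  T \subset attacked w theta (consolidation T).
Proof.
apply/subsetP => s sT.
by rewrite inE sum_consolidation sT sum_allocation thetaE mulrA.
Qed.

(* Services outside [T] are attacked only when [x * ws s = 0], and then no
   validator touches them in the consolidated profile either. *)
Lemma consolidation_enum_val T s (i : 'I_m) :
  s \in attacked w theta (consolidation T) ->
  consolidation T (enum_val i) s = slot_fill x i * ws s.
Proof.
rewrite /consolidation enum_valK inE sum_consolidation sum_allocation thetaE.
rewrite mulrA -/x; case: ifP => // _ xws.
apply/esym/eqP; rewrite eq_le mulr_ge0 ?slot_fill_ge0 // andbT.
by apply: le_trans xws; rewrite ler_wpM2r ?slot_fill_le ?x_ge0.
Qed.

Lemma consolidated_consolidation T :
  consolidated w theta ws th enum_val (consolidation T).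
Proof.
move=> s sT i /=; rewrite consolidation_enum_val // slot_fillE -/m -/x.
by case: ifP => _; [rewrite mul1r | case: ifP => _; rewrite ?mul0r].
Qed.

Lemma cost_consolidation_le (alpha : V -> S -> R) :
  is_attack w alpha ->
  cost sigma w theta (consolidation (attacked w theta alpha))
  <= cost sigma w theta alpha.
Proof.
set T := attacked w theta alpha => att.
set W := \sum_(s in T) ws s.
have loadE v :
    \sum_(s in attacked w theta (consolidation T)) consolidation T v s
    = slot_fill x (enum_rank v) * W.
  rewrite /W mulr_sumr /consolidation -big_mkcondr /=; apply: eq_bigl => s.
  case: (boolP (s \in T)) => [sT|_]; rewrite ?andbT ?andbF //.
  exact: (subsetP (subset_attacked_consolidation T)).
rewrite /cost /vcost; under eq_bigr do rewrite sigmaE loadE.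
under [X in _ <= X]eq_bigr do rewrite sigmaE.
rewrite (reindex _ (onW_bij _ (@enum_val_bij V))) /=.
under eq_bigr do rewrite enum_valK.
apply: sum_min_slot_fill_le x_le_card _ _; first exact: sumr_ge0.
  move=> v; rewrite sumr_ge0 => [|s _]; last by case: (att v s).
  by apply: ler_sum => s _; rewrite -(wE v); case: (att v s).
rewrite exchange_big /= /W mulr_sumr; apply: ler_sum => s.
by rewrite inE sum_allocation thetaE mulrA.
Qed.

End Consolidation.

Theorem mainTheorem12 (R : realType) (V S : finType)
    (sigma : V -> R) (w : V -> S -> R) (theta : S -> R) (pi : S -> R)
    (sg : R) (ws : S -> R) (th : R) :
  is_network sigma w theta pi ->
  symmetric_net sigma w theta sg ws th ->
  (exists alpha, is_attack w alpha /\ profitable sigma w theta pi alpha) ->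
  exists alpha, is_attack w alpha /\ profitable sigma w theta pi alpha /\
    exists e : 'I_#|V| -> V, bijective e /\ consolidated w theta ws th e alpha.
Proof.
move=> [Vpos _ w_bnd theta_bnd pi_gt0] [sigmaE wE thetaE].
move=> [alpha [att [attacked_ne0 cost_le]]].
set T := attacked w theta alpha.
have [s0 s0T] := set0Pn _ attacked_ne0.
have [th_ge0 th_le1] := theta_bnd s0; rewrite thetaE in th_ge0 th_le1.
have [v0 _] := card_gt0P Vpos.
have ws_ge0 s : 0 <= ws s by rewrite -(wE v0); case: (w_bnd v0 s).
have T_sub := subset_attacked_consolidation wE thetaE th_ge0 th_le1 T.
exists (consolidation ws th T); split; first exact: consolidation_attack.
split; [split|].
- by apply/set0Pn; exists s0; exact: (subsetP T_sub s0 s0T).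
- have := cost_consolidation_le sigmaE wE thetaE ws_ge0 th_ge0 th_le1 att.
  move/le_trans; apply.
  apply: le_trans cost_le _; apply: prize_subset => // s; exact: ltW.
- exists enum_val; split; first exact: enum_val_bij.
  exact: consolidated_consolidation.
Qed.
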